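(* Assume Hypothesis (H1) and let $n\ge2$. Put $K_0:=(H_0-E_0)^{-1}\bar P_0$ and $E_1:=\langle\psi_0,V\psi_0\rangle$, and define recursively, for $m=1,\dots,n-2$, $$K_m:=\sum_{j=1}^{m}K_{j-1}\,(E_{m+1-j}-\delta_{jm}V)\,K_0,$$ and, for $m=2,\dots,n$, $E_m:=-\langle V\psi_0,K_{m-2}V\psi_0\rangle$, where it is assumed that $\bar P_0V\psi_0\in{\rm dom}(K_l)$ for $l=0,\dots,n-2$ (i.e. all operator products applied to $\bar P_0V\psi_0$ are well defined). Then for all $m=1,\dots,n$ $$\lim_{\lambda\downarrow0}\lambda^{-m}\Big(E(\lambda)-\sum_{k=0}^{m}E_k\lambda^k\Big)=0 .$$
   Context: Let $H_0$ and $V$ be self-adjoint operators in a Hilbert space $\mathcal H$. Hypothesis (H1): $H_0$ is bounded from below and $V$ is $H_0$-bounded; there is $\lambda_0>0$ such that for every $\lambda\in[0,\lambda_0]$ there is a simple eigenvalue $E(\lambda)$ of $H(\lambda)=H_0+\lambda V$ with eigenvector $\psi(\lambda)$; moreover $\lim_{\lambda\to0}\psi(\lambda)=\psi(0)\neq0$, $\lim_{\lambda\to0}E(\lambda)=E(0)$, and $\langle\psi(0),\psi(\lambda)\rangle=1$ for all $\lambda\in[0,\lambda_0]$. Write $E_0=E(0)$, $\psi_0=\psi(0)$, $P_0$ the orthogonal projection onto $\ker(H_0-E_0)=\mathbb C\psi_0$, $\bar P_0=1-P_0$. The operator $(H_0-E_0)^{-1}\bar P_0$ maps a vector $\xi$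 to the unique $\chi\in{\rm dom}(H_0)\cap\bar P_0\mathcal H$ with $(H_0-E_0)\chi=\bar P_0\xi$, on the set of $\xi$ for which such $\chi$ exists. $\delta_{ij}$ is the Kronecker delta. *)

From Stdlib Require Import Reals List.
Import ListNotations.
Open Scope R_scope.

Record cpx := mkC { Cre : R; Cim : R }.
Definition c0 : cpx := mkC 0 0.
Definition c1 : cpx := mkC 1 0.
Definition RtoC (r : R) : cpx := mkC r 0.
Definition cadd (a b : cpx) : cpx := mkC (Cre a + Cre b) (Cim a + Cim b).
Definition copp (a : cpx) : cpx := mkC (- Cre a) (- Cim a).
Definition csub (a b : cpx) : cpx := cadd a (copp b).
Definition cmul (a b : cpx) : cpx :=
  mkC (Cre a * Cre b - Cim a * Cim b) (Cre a * Cim b + Cim a * Cre b).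
Definition cconj (a : cpx) : cpx := mkC (Cre a) (- Cim a).
Definition cmod (a : cpx) : R := sqrt (Cre a * Cre a + Cim a * Cim a).

(** * Complex Hilbert spaces (inner product linear in the 2nd argument) *)
Record Hilbert := {
  hcar :> Type;
  hzero : hcar;
  hadd : hcar -> hcar -> hcar;
  hopp : hcar -> hcar;
  hscal : cpx -> hcar -> hcar;
  hinner : hcar -> hcar -> cpx;
  hadd_assoc : forall x y z, hadd x (hadd y z) = hadd (hadd x y) z;
  hadd_comm : forall x y, hadd x y = hadd y x;
  hadd_0 : forall x, hadd x hzero = x;
  hadd_opp : forall x, hadd x (hopp x) = hzero;
  hscal_1 : forall x, hscal c1 x = x;
  hscal_mul : forall a b x, hscal (cmul a b) x = hscal a (hscal b x);
  hscal_addv : forall a x y, hscal a (hadd x y) = hadd (hscal a x) (hscal a y);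
  hscal_adds : forall a b x, hscal (cadd a b) x = hadd (hscal a x) (hscal b x);
  hinner_conj : forall x y, hinner x y = cconj (hinner y x);
  hinner_addr : forall x y z, hinner x (hadd y z) = cadd (hinner x y) (hinner x z);
  hinner_scalr : forall a x y, hinner x (hscal a y) = cmul a (hinner x y);
  hinner_pos : forall x, 0 <= Cre (hinner x x);
  hinner_def : forall x, hinner x x = c0 -> x = hzero;
  hcomplete : forall u : nat -> hcar,
    (forall eps, 0 < eps -> exists N, forall p q, (N <= p)%nat -> (N <= q)%nat ->
        sqrt (Cre (hinner (hadd (u p) (hopp (u q))) (hadd (u p) (hopp (u q))))) < eps) ->
    exists l, forall eps, 0 < eps -> exists N, forall p, (N <= p)%nat ->
        sqrt (Cre (hinner (hadd (u p) (hopp l)) (hadd (u p) (hopp l)))) < eps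
}.

Arguments hzero {h}.
Arguments hadd {h}.
Arguments hopp {h}.
Arguments hscal {h}.
Arguments hinner {h}.

Section Ops.
Variable Hs : Hilbert.

Definition hsub (x y : Hs) : Hs := hadd x (hopp y).
Definition hnorm (x : Hs) : R := sqrt (Cre (hinner x x)).

Record Op := { odom : Hs -> Prop; oapp : Hs -> Hs }.

Definition is_linear_op (A : Op) : Prop :=
  odom A hzero /\
  (forall x y, odom A x -> odom A y -> odom A (hadd x y) /\
       oapp A (hadd x y) = hadd (oapp A x) (oapp A y)) /\
  (forall a x, odom A x -> odom A (hscal a x) /\
       oapp A (hscal a x) = hscal a (oapp A x)).

Definition dense (D : Hs -> Prop) : Prop :=
  forall x eps, 0 < eps -> exists y, D y /\ hnorm (hsub x y) < eps.

(** A = A^* : densely defined, symmetric, and dom(A^* ) ⊆ dom(A). *)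
Definition self_adjoint (A : Op) : Prop :=
  is_linear_op A /\ dense (odom A) /\
  (forall x y, odom A x -> odom A y -> hinner x (oapp A y) = hinner (oapp A x) y) /\
  (forall y z, (forall x, odom A x -> hinner y (oapp A x) = hinner z x) -> odom A y).

Definition bounded_below (A : Op) : Prop :=
  exists c : R, forall x, odom A x -> c * (hnorm x * hnorm x) <= Cre (hinner x (oapp A x)).

Definition rel_bounded (V A : Op) : Prop :=
  (forall x, odom A x -> odom V x) /\
  exists a b : R, 0 <= a /\ 0 <= b /\
    forall x, odom A x -> hnorm (oapp V x) <= a * hnorm (oapp A x) + b * hnorm x.

(** H(λ) = H0 + λ V, on dom(H0) (= dom H0 ∩ dom V). *)
Definition Hlam (H0 V : Op) (l : R) : Op :=
  {| odom := odom H0;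
     oapp := fun x => hadd (oapp H0 x) (hscal (RtoC l) (oapp V x)) |}.

Definition H1 (H0 V : Op) (lam0 : R) (E : R -> R) (psi : R -> Hs) : Prop :=
  self_adjoint H0 /\ self_adjoint V /\ bounded_below H0 /\ rel_bounded V H0 /\
  0 < lam0 /\
  (forall l, 0 <= l <= lam0 ->
     odom H0 (psi l) /\ psi l <> hzero /\
     oapp (Hlam H0 V l) (psi l) = hscal (RtoC (E l)) (psi l) /\
     (forall phi, odom H0 phi ->
        oapp (Hlam H0 V l) phi = hscal (RtoC (E l)) phi ->
        exists c, phi = hscal c (psi l))) /\
  (forall eps, 0 < eps -> exists d, 0 < d /\ forall l, 0 <= l <= lam0 -> l < d ->
      hnorm (hsub (psi l) (psi 0)) < eps /\ Rabs (E l - E 0) < eps) /\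
  (forall l, 0 <= l <= lam0 -> hinner (psi 0) (psi l) = c1).

(** Partial operators as (functional) relations: [A x y] means x ∈ dom A, A x = y. *)
Definition rel := Hs -> Hs -> Prop.

Definition rcomp (A B : rel) : rel := fun x z => exists y, B x y /\ A y z.

Fixpoint rsum (l : list rel) : rel :=
  match l with
  | [] => fun _ z => z = hzero
  | A :: l' => fun x z => exists y1 y2, A x y1 /\ rsum l' x y2 /\ z = hadd y1 y2
  end.

(** P̄0 = 1 - P0, P0 the orthogonal projection onto C ψ0. *)
Definition Pbar (psi0 : Hs) (x : Hs) : Hs :=
  hsub x (hscal (cmul (RtoC (/ (hnorm psi0 * hnorm psi0))) (hinner psi0 x)) psi0).

(** K0 = (H0 - E0)^{-1} P̄0 : K0 x χ iff χ ∈ dom H0 ∩ P̄0 H and (H0-E0)χ = P̄0 x. *)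
Definition K0rel (H0 : Op) (E0 : R) (psi0 : Hs) : rel := fun x chi =>
  odom H0 chi /\ hinner psi0 chi = c0 /\
  hsub (oapp H0 chi) (hscal (RtoC E0) chi) = Pbar psi0 x.

Definition Lrel (V : Op) (Ec : nat -> cpx) (m j : nat) : rel := fun x z =>
  if Nat.eqb j m then odom V x /\ z = hsub (hscal (Ec (m + 1 - j)%nat) x) (oapp V x)
  else z = hscal (Ec (m + 1 - j)%nat) x.

Definition Kstep (V : Op) (Ec : nat -> cpx) (K : nat -> rel) (K0 : rel) (m : nat) : rel :=
  rsum (map (fun j => rcomp (K (j - 1)%nat) (rcomp (Lrel V Ec m j) K0)) (seq 1 m)).

End Ops.

Arguments odom {Hs}.
Arguments oapp {Hs}.

Definition taylor (Ec : nat -> cpx) (m : nat) (l : R) : cpx :=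
  fold_right cadd c0 (map (fun k => cmul (Ec k) (RtoC (l ^ k))) (seq 0 (S m))).

(* Write [F l v := <psi l, v>].  Pairing the eigenvalue equation with [psi 0] gives
   [E l = E 0 + l F l (V psi0)], and pairing [(H0 - E0) K0 v = Pbar v] with [psi l] gives
   [F l v = F 0 v + (E l - E 0) F l (K0 v) - l F l (V K0 v)].  Feeding the first identity into
   the second shows, by strong induction on [k], that [F l v = sum_(i<=k) c_i(v) l^i + o(l^k)]
   with [c_0(v) = <psi0, v>] and [c_(i+1)(v) = - <V psi0, K_i v>] as soon as [v] lies in the
   domains of [K_0, ..., K_(k-1)]: the recursion defining [K_m] is precisely what makes the
   coefficients match.  As [c_i(V psi0) = E_(i+1)], the expansion of [F l (V psi0)] to order
   [m - 1] is that of [E l] to order [m].  The only analytic input is the continuity of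
   [l |-> F l v] at [0], which follows from [psi l -> psi0] by Cauchy-Schwarz. *)

From Pilot Require Import Defs.
From Stdlib Require Import Reals List Lra Lia ClassicalEpsilon Rlimit Wf_nat.
(* Re-import [Defs] so that [c1] is the complex unit again, not the [C1_fun] of [Reals]. *)
Import Defs.
Open Scope R_scope.

Lemma cpx_ext (a b : cpx) : Cre a = Cre b -> Cim a = Cim b -> a = b.
Proof. destruct a, b; simpl; intros; subst; reflexivity. Qed.

Ltac cpx_field :=
  apply cpx_ext; unfold csub, cadd, copp, cmul, cconj, RtoC, c0, c1; cbn [Cre Cim]; field.

Lemma cpx_ring_theory : ring_theory c0 c1 cadd cmul csub copp (@eq cpx).
Proof. constructor; intros; cpx_field. Qed.
Add Ring cpx_ring : cpx_ring_theory.

Lemma cconj_RtoC a : cconj (RtoC a) = RtoC a.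
Proof. cpx_field. Qed.
Lemma cconj_add a b : cconj (cadd a b) = cadd (cconj a) (cconj b).
Proof. cpx_field. Qed.
Lemma cconj_mul a b : cconj (cmul a b) = cmul (cconj a) (cconj b).
Proof. cpx_field. Qed.

Lemma Rabs_Cre_le_cmod a : Rabs (Cre a) <= cmod a.
Proof.
  unfold cmod. rewrite <- sqrt_Rsqr_abs. apply sqrt_le_1_alt.
  unfold Rsqr. pose proof (Rle_0_sqr (Cim a)). unfold Rsqr in *. lra.
Qed.
Lemma Rabs_Cim_le_cmod a : Rabs (Cim a) <= cmod a.
Proof.
  unfold cmod. rewrite <- sqrt_Rsqr_abs. apply sqrt_le_1_alt.
  unfold Rsqr. pose proof (Rle_0_sqr (Cre a)). unfold Rsqr in *. lra.
Qed.

Arguments hadd_assoc {h}. Arguments hadd_comm {h}. Arguments hadd_0 {h}.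
Arguments hadd_opp {h}. Arguments hscal_1 {h}. Arguments hscal_addv {h}.
Arguments hscal_adds {h}. Arguments hinner_conj {h}. Arguments hinner_addr {h}.
Arguments hinner_scalr {h}. Arguments hinner_pos {h}. Arguments hinner_def {h}.

Section HilbertAlgebra.
Variable Hs : Hilbert.
Implicit Types x y z : Hs.

Lemma hadd_0l x : hadd hzero x = x.
Proof. rewrite hadd_comm; apply hadd_0. Qed.

Lemma hscal_c0 x : hscal c0 x = hzero.
Proof.
  assert (Hxx : hadd (hscal c0 x) (hscal c0 x) = hscal c0 x).
  { rewrite <- hscal_adds. f_equal. ring. }
  transitivity (hadd (hadd (hscal c0 x) (hscal c0 x)) (hopp (hscal c0 x))).
  - rewrite <- hadd_assoc, hadd_opp, hadd_0. reflexivity.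
  - rewrite Hxx. apply hadd_opp.
Qed.

Lemma hopp_unique x y : hadd x y = hzero -> y = hopp x.
Proof.
  intro H. rewrite <- (hadd_0 y), <- (hadd_opp x), hadd_assoc, (hadd_comm y x), H.
  apply hadd_0l.
Qed.

Lemma hopp_scal x : hopp x = hscal (copp c1) x.
Proof.
  symmetry; apply hopp_unique. rewrite <- (hscal_1 x) at 1.
  rewrite <- hscal_adds. replace (cadd c1 (copp c1)) with c0 by ring.
  apply hscal_c0.
Qed.

Lemma hinner_0r x : hinner x (@hzero Hs) = c0.
Proof. rewrite <- (hscal_c0 hzero), hinner_scalr. ring. Qed.

Lemma hinner_addl x y z : hinner (hadd x y) z = cadd (hinner x z) (hinner y z).
Proof. rewrite hinner_conj, hinner_addr, cconj_add, <- !hinner_conj. reflexivity. Qed.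

Lemma hinner_scall a x y : hinner (hscal a x) y = cmul (cconj a) (hinner x y).
Proof. rewrite hinner_conj, hinner_scalr, cconj_mul, <- hinner_conj. reflexivity. Qed.

Lemma hinner_subr x y z : hinner x (hsub Hs y z) = csub (hinner x y) (hinner x z).
Proof. unfold hsub. rewrite hinner_addr, hopp_scal, hinner_scalr. ring. Qed.

Lemma hinner_subl x y z : hinner (hsub Hs x y) z = csub (hinner x z) (hinner y z).
Proof.
  unfold hsub. rewrite hinner_addl, hopp_scal, hinner_scall.
  replace (cconj (copp c1)) with (copp c1) by cpx_field. ring.
Qed.

Lemma hinner_ext x y : (forall z, hinner z x = hinner z y) -> x = y.
Proof.
  intro H. assert (Hxy : hsub Hs x y = hzero).
  { apply hinner_def. rewrite hinner_subr, !H. ring. }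
  rewrite <- (hadd_0 x), <- (hadd_opp y), (hadd_comm y), hadd_assoc.
  unfold hsub in Hxy. rewrite Hxy. apply hadd_0l.
Qed.

(* Cauchy-Schwarz in a form that needs no case distinction on [y = 0]:
   expand [0 <= <z, z>] for [z = x - t <x,y>^* y] with [t = 1/(<y,y> + 1)]. *)
Lemma hinner_sqr_le x y :
  Cre (hinner x y) * Cre (hinner x y) + Cim (hinner x y) * Cim (hinner x y)
  <= Cre (hinner x x) * (Cre (hinner y y) + 1).
Proof.
  set (t := / (Cre (hinner y y) + 1)).
  pose proof (hinner_pos (hsub Hs x (hscal (cmul (RtoC t) (cconj (hinner x y))) y))) as Hz.
  rewrite !hinner_subl, !hinner_subr, !hinner_scall, !hinner_scalr in Hz.
  rewrite (hinner_conj y x) in Hz.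
  assert (Hyy : Cim (hinner y y) = 0).
  { pose proof (f_equal Cim (hinner_conj y y)) as Hc. simpl in Hc. lra. }
  assert (HM : 0 <= Cre (hinner y y)) by apply hinner_pos.
  destruct (hinner x y) as [ar ai], (hinner y y) as [yr yi], (hinner x x) as [xr xi].
  simpl in *; subst yi. unfold csub, cadd, copp, cmul, cconj, RtoC in Hz; simpl in Hz.
  set (s := ar * ar + ai * ai) in *.
  assert (Ht : t * (yr + 1) = 1) by (unfold t; field; lra).
  assert (Htpos : 0 < t) by (unfold t; apply Rinv_0_lt_compat; lra).
  assert (Hs0 : 0 <= s) by (unfold s; nra).
  assert (Hz' : 0 <= xr - 2 * t * s + t * t * s * yr) by (unfold s; nra).
  assert (Htyr : t * yr <= 1) by nra.
  assert (Hts : t * s <= xr).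
  { assert (t * s * (t * yr) <= t * s * 1) by (apply Rmult_le_compat_l; nra). nra. }
  replace s with (t * s * (yr + 1)) by (rewrite Rmult_assoc, (Rmult_comm s), <- Rmult_assoc, Ht; ring).
  apply Rmult_le_compat_r; lra.
Qed.

Lemma cmod_hinner_le x y : cmod (hinner x y) <= hnorm Hs x * (hnorm Hs y + 1).
Proof.
  unfold cmod, hnorm.
  pose proof (hinner_pos x) as HN. pose proof (hinner_pos y) as HM.
  pose proof (sqrt_pos (Cre (hinner y y))) as Hsq.
  pose proof (sqrt_sqrt _ HM) as Hsq2.
  rewrite <- (sqrt_square (sqrt (Cre (hinner y y)) + 1)) by lra.
  rewrite <- sqrt_mult by nra.
  apply sqrt_le_1_alt. eapply Rle_trans; [apply hinner_sqr_le|].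
  apply Rmult_le_compat_l; nra.
Qed.

End HilbertAlgebra.

Definition lsum (f : nat -> cpx) (js : list nat) : cpx := fold_right cadd c0 (map f js).

Lemma lsum_app f js ks : lsum f (js ++ ks) = cadd (lsum f js) (lsum f ks).
Proof. unfold lsum; induction js; simpl; [ring|]. rewrite IHjs; ring. Qed.

Lemma lsum_ext f g js : (forall j, In j js -> f j = g j) -> lsum f js = lsum g js.
Proof. intro H. unfold lsum. f_equal. apply map_ext_in. exact H. Qed.

Lemma lsum_opp f js : lsum (fun j => copp (f j)) js = copp (lsum f js).
Proof. unfold lsum; induction js; simpl; [ring|]. rewrite IHjs; ring. Qed.

Lemma lsum_mul_sub a f g js :
  lsum (fun j => cmul a (csub (f j) (g j))) js = cmul a (csub (lsum f js) (lsum g js)).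
Proof. unfold lsum; induction js; simpl; [ring|]. rewrite IHjs; ring. Qed.

Lemma lsum_seq_S f k :
  lsum f (seq 1 (S k)) = cadd (f 1%nat) (lsum (fun j => f (S j)) (seq 1 k)).
Proof. unfold lsum. simpl. f_equal. rewrite <- seq_shift, map_map. reflexivity. Qed.

Lemma taylor_S Ec m l :
  taylor Ec (S m) l = cadd (taylor Ec m l) (cmul (Ec (S m)) (RtoC (l ^ S m))).
Proof.
  change (taylor Ec (S m) l) with (lsum (fun k => cmul (Ec k) (RtoC (l ^ k))) (seq 0 (S (S m)))).
  rewrite seq_S, lsum_app. unfold taylor, lsum; simpl. ring.
Qed.

Section ComplexLimits.
Variable D : R -> Prop.

Definition clim (f : R -> cpx) (c : cpx) : Prop :=
  limit1_in (fun l => Cre (f l)) D (Cre c) 0 /\ limit1_in (fun l => Cim (f l)) D (Cim c) 0.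

Lemma limit1_in_ext f g a : limit1_in f D a 0 -> (forall l, D l -> f l = g l) ->
  limit1_in g D a 0.
Proof.
  intros H Hfg eps Heps. destruct (H eps Heps) as [d [Hd Hl]]. exists d; split; auto.
  intros l [Dl Hld]. rewrite <- Hfg; auto.
Qed.

Lemma clim_ext f g c : clim f c -> (forall l, D l -> f l = g l) -> clim g c.
Proof.
  intros [Hre Him] Hfg; split; eapply limit1_in_ext; eauto; intros; simpl; rewrite Hfg; auto.
Qed.

Lemma clim_const c : clim (fun _ => c) c.
Proof.
  split; [apply (limit_free (fun _ => Cre c) D 0 0) | apply (limit_free (fun _ => Cim c) D 0 0)].
Qed.

Lemma clim_add f g a b : clim f a -> clim g b -> clim (fun l => cadd (f l) (g l)) (cadd a b).
Proof. intros [] []; split; apply limit_plus; auto. Qed.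

Lemma clim_sub f g a b : clim f a -> clim g b -> clim (fun l => csub (f l) (g l)) (csub a b).
Proof. intros [] []; split; apply limit_plus; auto; apply limit_Ropp; auto. Qed.

Lemma clim_mul f g a b : clim f a -> clim g b -> clim (fun l => cmul (f l) (g l)) (cmul a b).
Proof.
  intros [] []; split; simpl;
  [apply limit_minus | apply limit_plus]; apply limit_mul; auto.
Qed.

Lemma clim_lsum (f : R -> nat -> cpx) c js :
  (forall j, In j js -> clim (fun l => f l j) (c j)) ->
  clim (fun l => lsum (f l) js) (lsum c js).
Proof.
  induction js as [|j js IH]; intros H; unfold lsum; simpl.
  - apply clim_const.
  - apply clim_add; [apply H; left; auto | apply IH; intros; apply H; right; auto].
Qed.

Hypothesis D_pos : forall l, D l -> 0 < l.

Lemma clim_cmod f c : clim f c <-> forall eps, 0 < eps -> exists d, 0 < d /\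
  forall l, D l -> l < d -> cmod (csub (f l) c) < eps.
Proof.
  assert (Hdist : forall l d, D l -> (R_dist l 0 < d <-> l < d)).
  { intros l d Dl. pose proof (D_pos l Dl). unfold R_dist.
    rewrite Rminus_0_r, Rabs_right by lra. tauto. }
  split.
  - intros [Hre Him] eps Heps.
    destruct (Hre (eps / 2)) as [d1 [Hd1 H1]]; [lra|].
    destruct (Him (eps / 2)) as [d2 [Hd2 H2]]; [lra|].
    exists (Rmin d1 d2); split; [apply Rmin_pos; auto|]. intros l Dl Hl.
    assert (Ha : Rabs (Cre (f l) - Cre c) < eps / 2).
    { apply (H1 l); split; auto. apply Hdist; auto. eapply Rlt_le_trans; [eauto|apply Rmin_l]. }
    assert (Hb : Rabs (Cim (f l) - Cim c) < eps / 2).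
    { apply (H2 l); split; auto. apply Hdist; auto. eapply Rlt_le_trans; [eauto|apply Rmin_r]. }
    apply Rabs_def2 in Ha, Hb.
    unfold cmod, csub, cadd, copp; simpl.
    rewrite <- (sqrt_square eps) by lra. apply sqrt_lt_1_alt.
    set (a := Cre (f l) + - Cre c). set (b := Cim (f l) + - Cim c).
    assert (a * a < eps / 2 * (eps / 2)) by (unfold a; nra).
    assert (b * b < eps / 2 * (eps / 2)) by (unfold b; nra).
    split; nra.
  - intros H.
    assert (Hcomp : forall g : cpx -> R, (forall a, Rabs (g a) <= cmod a) ->
              (forall a b, g (csub a b) = g a - g b) ->
              limit1_in (fun l => g (f l)) D (g c) 0).
    { intros g Hg Hsub eps Heps. destruct (H eps Heps) as [d [Hd Hl]].
      exists d; split; auto. intros l [Dl Hld]. simpl; unfold R_dist.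
      rewrite <- Hsub. eapply Rle_lt_trans; [apply Hg|].
      apply Hl; auto. apply (Hdist l d Dl); exact Hld. }
    split; apply Hcomp; auto using Rabs_Cre_le_cmod, Rabs_Cim_le_cmod;
    intros; simpl; ring.
Qed.

End ComplexLimits.

Section Relations.
Variable Hs : Hilbert.

Definition functional (A : rel Hs) : Prop := forall x y y', A x y -> A x y' -> y = y'.

Lemma rcomp_functional A B : functional A -> functional B -> functional (rcomp Hs A B).
Proof.
  intros HA HB x y y' [a [Ha1 Ha2]] [b [Hb1 Hb2]].
  rewrite (HB _ _ _ Ha1 Hb1) in Ha2. eauto.
Qed.

Lemma rsum_functional As : (forall A, In A As -> functional A) -> functional (rsum Hs As).
Proof.
  induction As as [|A As IH]; intros H x y y'; simpl.
  - intros; subst; auto.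
  - intros [a1 [a2 [Ha1 [Ha2 ->]]]] [b1 [b2 [Hb1 [Hb2 ->]]]].
    rewrite (H A (or_introl eq_refl) _ _ _ Ha1 Hb1).
    rewrite (IH (fun B HB => H B (or_intror HB)) _ _ _ Ha2 Hb2). auto.
Qed.

Lemma rsum_map_dom (h : nat -> rel Hs) js x z :
  rsum Hs (map h js) x z -> forall j, In j js -> exists y, h j x y.
Proof.
  revert z. induction js as [|k js IH]; simpl; intros z Hz j Hj; [contradiction|].
  destruct Hz as [y1 [y2 [Hy1 [Hy2 _]]]]. destruct Hj as [<-|Hj]; eauto.
Qed.

Lemma rsum_map_additive (h : nat -> rel Hs) (f : Hs -> cpx) (c : nat -> cpx) js x z :
  (forall a b, f (hadd a b) = cadd (f a) (f b)) -> f hzero = c0 ->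
  rsum Hs (map h js) x z -> (forall j y, In j js -> h j x y -> f y = c j) ->
  f z = lsum c js.
Proof.
  intros Hadd Hzero. revert z. induction js as [|k js IH]; simpl; intros z Hz Hc.
  - subst; auto.
  - destruct Hz as [y1 [y2 [Hy1 [Hy2 ->]]]]. unfold lsum; simpl. rewrite Hadd.
    rewrite (Hc k y1) by auto. f_equal. apply IH; auto.
Qed.

End Relations.

Section Eigenvector.
Variable Hs : Hilbert.
Variables H0 V : Op Hs.
Variable lam0 : R.
Variable E : R -> R.
Variable psi : R -> Hs.

Hypothesis H0_linear : is_linear_op Hs H0.
Hypothesis H0_sym : forall x y, odom H0 x -> odom H0 y ->
  hinner x (oapp H0 y) = hinner (oapp H0 x) y.
Hypothesis V_sym : forall x y, odom V x -> odom V y ->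
  hinner x (oapp V y) = hinner (oapp V x) y.
Hypothesis dom_H0_V : forall x, odom H0 x -> odom V x.
Hypothesis lam0_ge0 : 0 <= lam0.
Hypothesis psi_dom : forall l, 0 <= l <= lam0 -> odom H0 (psi l).
Hypothesis psi_eigen : forall l, 0 <= l <= lam0 ->
  hadd (oapp H0 (psi l)) (hscal (RtoC l) (oapp V (psi l))) = hscal (RtoC (E l)) (psi l).
Hypothesis E0_simple : forall phi, odom H0 phi ->
  oapp H0 phi = hscal (RtoC (E 0)) phi -> exists c, phi = hscal c (psi 0).
Hypothesis psi_cont : forall eps, 0 < eps -> exists d, 0 < d /\
  forall l, 0 <= l <= lam0 -> l < d -> hnorm Hs (hsub Hs (psi l) (psi 0)) < eps.
Hypothesis psi_normalized : forall l, 0 <= l <= lam0 -> hinner (psi 0) (psi l) = c1.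

Local Notation Vpsi0 := (oapp V (psi 0)).

Lemma range_0 : 0 <= 0 <= lam0.
Proof. lra. Qed.

Lemma H0_psi0 : oapp H0 (psi 0) = hscal (RtoC (E 0)) (psi 0).
Proof. rewrite <- (psi_eigen 0 range_0), hscal_c0, hadd_0. reflexivity. Qed.

Lemma hinner_psi_psi0 l : 0 <= l <= lam0 -> hinner (psi l) (psi 0) = c1.
Proof. intro Hl. rewrite hinner_conj, psi_normalized by auto. cpx_field. Qed.

Lemma psi0_unit : hinner (psi 0) (psi 0) = c1.
Proof. apply psi_normalized, range_0. Qed.

Lemma E_first_order l : 0 <= l <= lam0 ->
  RtoC (E l) = cadd (RtoC (E 0)) (cmul (RtoC l) (hinner (psi l) Vpsi0)).
Proof.
  intros Hl.
  pose proof (f_equal (fun v => hinner v (psi 0)) (psi_eigen l Hl)) as He. simpl in He.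
  rewrite hinner_addl, !hinner_scall, !cconj_RtoC, <- H0_sym, <- V_sym,
    H0_psi0, hinner_scalr, hinner_psi_psi0 in He by auto using range_0.
  transitivity (cmul (RtoC (E l)) c1); [ring|]. rewrite <- He. ring.
Qed.

Lemma Pbar_psi0 u : Pbar Hs (psi 0) u = hsub Hs u (hscal (hinner (psi 0) u) (psi 0)).
Proof.
  unfold Pbar, hnorm. rewrite psi0_unit. simpl. rewrite sqrt_1, Rmult_1_l, Rinv_1.
  f_equal. f_equal. cpx_field.
Qed.

Lemma hinner_psi_K0 u chi l : K0rel Hs H0 (E 0) (psi 0) u chi -> 0 <= l <= lam0 ->
  hinner (psi l) u =
  cadd (hinner (psi 0) u)
       (csub (cmul (csub (RtoC (E l)) (RtoC (E 0))) (hinner (psi l) chi))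
             (cmul (RtoC l) (hinner (psi l) (oapp V chi)))).
Proof.
  intros [Hchi [_ Heq]] Hl.
  pose proof (f_equal (hinner (psi l)) Heq) as Hu.
  rewrite Pbar_psi0, !hinner_subr, !hinner_scalr, hinner_psi_psi0 in Hu by auto.
  pose proof (f_equal (fun v => hinner v chi) (psi_eigen l Hl)) as He. simpl in He.
  rewrite hinner_addl, !hinner_scall, !cconj_RtoC, <- H0_sym, <- V_sym in He by auto.
  set (a := hinner (psi l) (oapp H0 chi)) in *.
  assert (Ha : a = csub (cmul (RtoC (E l)) (hinner (psi l) chi))
                        (cmul (RtoC l) (hinner (psi l) (oapp V chi)))).
  { rewrite <- He. ring. }
  transitivity (cadd (csub a (cmul (RtoC (E 0)) (hinner (psi l) chi))) (hinner (psi 0) u)).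
  - rewrite Hu. ring.
  - rewrite Ha. ring.
Qed.

Lemma hsub_dom_H0 x y : odom H0 x -> odom H0 y ->
  odom H0 (hsub Hs x y) /\ oapp H0 (hsub Hs x y) = hsub Hs (oapp H0 x) (oapp H0 y).
Proof.
  intros Hx Hy. destruct H0_linear as [_ [Hadd Hscal]].
  unfold hsub. rewrite !hopp_scal.
  destruct (Hscal (copp c1) y Hy) as [Hy1 Hy2].
  destruct (Hadd x _ Hx Hy1) as [Hd Happ]. rewrite Happ, Hy2. auto.
Qed.

(* Two solutions differ by a vector of [ker (H0 - E0) = C psi0] orthogonal to [psi0]. *)
Lemma K0rel_functional : functional Hs (K0rel Hs H0 (E 0) (psi 0)).
Proof.
  intros u c c' [Hc [Hoc Heq]] [Hc' [Hoc' Heq']].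
  destruct (hsub_dom_H0 c c' Hc Hc') as [Hd HH0d].
  destruct (E0_simple (hsub Hs c c') Hd) as [a Ha].
  - rewrite HH0d. apply hinner_ext; intro z.
    pose proof (f_equal (hinner z) (eq_trans Heq (eq_sym Heq'))) as Hz.
    rewrite !hinner_subr, !hinner_scalr in Hz. rewrite hinner_scalr, !hinner_subr.
    set (A := hinner z (oapp H0 c)) in *. set (B := hinner z (oapp H0 c')) in *.
    transitivity (cadd (csub (csub A (cmul (RtoC (E 0)) (hinner z c)))
                             (csub B (cmul (RtoC (E 0)) (hinner z c'))))
                       (cmul (RtoC (E 0)) (csub (hinner z c) (hinner z c')))); [ring|].
    rewrite Hz. ring.
  - assert (Ha0 : a = c0).
    { pose proof (f_equal (hinner (psi 0)) Ha) as Hp.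
      rewrite hinner_subr, Hoc, Hoc', hinner_scalr, psi0_unit in Hp.
      transitivity (cmul a c1); [ring|]. rewrite <- Hp. ring. }
    apply hinner_ext; intro z.
    pose proof (f_equal (hinner z) Ha) as Hz.
    rewrite Ha0, hscal_c0, hinner_0r, hinner_subr in Hz.
    transitivity (cadd (csub (hinner z c) (hinner z c')) (hinner z c')); [ring|].
    rewrite Hz. ring.
Qed.

Definition pos_range (l : R) : Prop := 0 < l <= lam0.

Lemma pos_range_gt0 l : pos_range l -> 0 < l.
Proof. intros [Hl _]. exact Hl. Qed.

Lemma hinner_psi_cvg v : clim pos_range (fun l => hinner (psi l) v) (hinner (psi 0) v).
Proof.
  apply clim_cmod; [exact pos_range_gt0|]. intros eps Heps.
  assert (Hv : 0 < hnorm Hs v + 1) by (pose proof (sqrt_pos (Cre (hinner v v))); unfold hnorm; lra).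
  destruct (psi_cont (eps / (hnorm Hs v + 1))) as [d [Hd Hpsi]].
  { apply Rdiv_lt_0_compat; lra. }
  exists d; split; auto. intros l [Hl0 Hl1] Hld.
  rewrite <- hinner_subl.
  eapply Rle_lt_trans; [apply cmod_hinner_le|].
  specialize (Hpsi l ltac:(lra) Hld).
  apply (Rmult_lt_compat_r (hnorm Hs v + 1)) in Hpsi; [|lra].
  unfold Rdiv in Hpsi. rewrite Rmult_assoc, Rinv_l, Rmult_1_r in Hpsi by lra. exact Hpsi.
Qed.

Section Expansion.
Variable n : nat.
Variable Ec : nat -> cpx.
Variable K : nat -> rel Hs.

Hypothesis HK0 : forall x y, K 0%nat x y <-> K0rel Hs H0 (E 0) (psi 0) x y.
Hypothesis HKm : forall m, (1 <= m <= n - 2)%nat ->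
  forall x y, K m x y <-> Kstep Hs V Ec K (K 0%nat) m x y.
Hypothesis HE0 : Ec 0%nat = RtoC (E 0).
Hypothesis HE1 : Ec 1%nat = hinner (psi 0) Vpsi0.
Hypothesis HEm : forall m, (2 <= m <= n)%nat ->
  exists y, K (m - 2)%nat Vpsi0 y /\ Ec m = copp (hinner Vpsi0 y).

Definition E1_sub_V (x : Hs) : Hs := hsub Hs (hscal (Ec 1%nat) x) (oapp V x).

Definition Lfun (m j : nat) (x : Hs) : Hs :=
  if Nat.eqb j m then E1_sub_V x else hscal (Ec (m + 1 - j)) x.

Lemma Lrel_Lfun m j x z : Lrel Hs V Ec m j x z -> z = Lfun m j x.
Proof.
  unfold Lrel, Lfun, E1_sub_V.
  destruct (Nat.eqb j m) eqn:Hjm; [|auto].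
  apply Nat.eqb_eq in Hjm; subst j. replace (m + 1 - m)%nat with 1%nat by lia. tauto.
Qed.

Lemma Lfun_lt m j x : (j < m)%nat -> Lfun m j x = hscal (Ec (m + 1 - j)) x.
Proof. intro Hjm. unfold Lfun. replace (Nat.eqb j m) with false; [auto|]. symmetry; apply Nat.eqb_neq; lia. Qed.

Lemma Lfun_diag m x : Lfun m m x = E1_sub_V x.
Proof. unfold Lfun. rewrite Nat.eqb_refl. reflexivity. Qed.

Lemma K_functional m : (m <= n - 2)%nat -> functional Hs (K m).
Proof.
  induction m as [m IH] using lt_wf_ind. intros Hm.
  destruct m as [|m].
  - intros x y y' Hy Hy'. apply HK0 in Hy, Hy'. exact (K0rel_functional x y y' Hy Hy').
  - intros x y y' Hy Hy'. apply HKm in Hy, Hy'; try lia.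
    revert Hy Hy'. apply rsum_functional.
    intros A HA. apply in_map_iff in HA. destruct HA as [j [<- Hj]]. apply in_seq in Hj.
    apply rcomp_functional; [apply IH; lia|].
    apply rcomp_functional; [|apply IH; lia].
    intros u z z' Hz Hz'. apply Lrel_Lfun in Hz, Hz'. congruence.
Qed.

Definition Kval (m : nat) (v : Hs) : Hs := epsilon (inhabits hzero) (K m v).

Lemma Kval_eq m v y : (m <= n - 2)%nat -> K m v y -> Kval m v = y.
Proof.
  intros Hm Hy. apply (K_functional m Hm v); [|exact Hy].
  unfold Kval. apply epsilon_spec. eauto.
Qed.

Lemma Kstep_term m j u y chi : K 0%nat u chi ->
  rcomp Hs (K (j - 1)%nat) (rcomp Hs (Lrel Hs V Ec m j) (K 0%nat)) u y ->
  K (j - 1)%nat (Lfun m j chi) y.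
Proof.
  intros Hchi [w [[chi' [Hchi' Hw]] Hy]].
  rewrite (K_functional 0 (Nat.le_0_l _) _ _ _ Hchi' Hchi) in Hw.
  apply Lrel_Lfun in Hw. subst w. exact Hy.
Qed.

Lemma Kstep_dom m j u y chi : (1 <= j <= m)%nat -> (m <= n - 2)%nat -> K m u y -> K 0%nat u chi ->
  exists y', K (j - 1)%nat (Lfun m j chi) y'.
Proof.
  intros Hjm Hm Hy Hchi. apply HKm in Hy; [|lia].
  destruct (rsum_map_dom Hs _ _ _ _ Hy j) as [y' Hy']; [apply in_seq; lia|].
  exists y'. exact (Kstep_term m j u y' chi Hchi Hy').
Qed.

Lemma Kstep_hinner m u y chi : (1 <= m <= n - 2)%nat -> K m u y -> K 0%nat u chi ->
  hinner Vpsi0 y = lsum (fun j => hinner Vpsi0 (Kval (j - 1)%nat (Lfun m j chi))) (seq 1 m).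
Proof.
  intros Hm Hy Hchi. apply HKm in Hy; auto.
  apply (rsum_map_additive Hs _ (hinner Vpsi0) _ _ _ _ (hinner_addr _) (hinner_0r Hs _) Hy).
  intros j y' Hj Hy'. apply in_seq in Hj.
  rewrite (Kval_eq (j - 1) _ y'); [reflexivity | lia | exact (Kstep_term m j u y' chi Hchi Hy')].
Qed.

(* [coef k v] is the k-th Taylor coefficient of [l |-> <psi l, v>] at [0], and
   [rem l k v] the k-th normalised remainder [l^-k (<psi l, v> - sum_(i<k) coef i v l^i)]. *)
Definition coef (k : nat) (v : Hs) : cpx :=
  match k with
  | O => hinner (psi 0) v
  | S k' => copp (hinner Vpsi0 (Kval k' v))
  end.

Fixpoint rem (l : R) (k : nat) (v : Hs) : cpx :=
  match k with
  | O => hinner (psi l) v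
  | S k' => cmul (RtoC (/ l)) (csub (rem l k' v) (coef k' v))
  end.

Definition in_dom_K (k : nat) (v : Hs) : Prop := forall m, (m < k)%nat -> exists y, K m v y.

Lemma in_dom_K_Vpsi0 k : (k <= n - 1)%nat -> in_dom_K k Vpsi0.
Proof.
  intros Hk m Hm. destruct (HEm (m + 2)) as [y [Hy _]]; [lia|].
  replace (m + 2 - 2)%nat with m in Hy by lia. eauto.
Qed.

Lemma coef_Vpsi0 k : (k <= n - 1)%nat -> coef k Vpsi0 = Ec (S k).
Proof.
  intros Hk. destruct k as [|k]; [simpl; auto|].
  destruct (HEm (S (S k))) as [y [Hy Hey]]; [lia|].
  replace (S (S k) - 2)%nat with k in Hy by lia.
  simpl. rewrite Hey, (Kval_eq k _ y); auto; lia.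
Qed.

Lemma K0_orth v chi : K 0%nat v chi -> odom H0 chi /\ hinner (psi 0) chi = c0.
Proof. intro Hchi. apply HK0 in Hchi. destruct Hchi as [? [? _]]. auto. Qed.

Lemma coef_recursion k v y chi : (k <= n - 2)%nat -> K k v y -> K 0%nat v chi ->
  coef (S k) v = cadd (coef k (E1_sub_V chi))
                      (lsum (fun j => coef j (hscal (Ec (k + 1 - j)) chi)) (seq 1 (k - 1))).
Proof.
  intros Hk Hy Hchi. destruct (K0_orth v chi Hchi) as [Hdom Horth].
  destruct k as [|k].
  - simpl. rewrite (Kval_eq 0 v chi) by (auto; lia).
    unfold E1_sub_V. rewrite hinner_subr, hinner_scalr, Horth, V_sym by auto using range_0.
    unfold lsum; simpl. ring.
  - simpl coef at 1. rewrite (Kval_eq (S k) v y), (Kstep_hinner (S k) v y chi) by (auto; lia).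
    rewrite seq_S, lsum_app. unfold lsum at 2; simpl map; simpl fold_right.
    replace (1 + k)%nat with (S k) by lia. rewrite Lfun_diag, Nat.sub_succ, Nat.sub_0_r.
    rewrite (lsum_ext (fun j => coef j (hscal (Ec (S k + 1 - j)) chi))
                      (fun j => copp (hinner Vpsi0 (Kval (j - 1) (Lfun (S k) j chi))))).
    + rewrite lsum_opp. simpl coef. ring.
    + intros j Hj. apply in_seq in Hj. destruct j as [|j]; [lia|].
      rewrite Lfun_lt by lia. simpl. rewrite Nat.sub_0_r. reflexivity.
Qed.

Lemma rem1_eq l v chi : pos_range l -> K 0%nat v chi ->
  rem l 1 v = cadd (hinner (psi l) (E1_sub_V chi))
                   (cmul (csub (hinner (psi l) Vpsi0) (Ec 1%nat)) (hinner (psi l) chi)).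
Proof.
  intros [Hl0 Hl1] Hchi. apply HK0 in Hchi. simpl.
  rewrite (hinner_psi_K0 v chi l Hchi), (E_first_order l) by lra.
  unfold E1_sub_V. rewrite hinner_subr, hinner_scalr.
  cpx_field; lra.
Qed.

Lemma rem_recursion k v chi l : pos_range l -> K 0%nat v chi ->
  (S k <= n - 1)%nat -> in_dom_K (S k) v ->
  rem l (S (S k)) v =
  cadd (cadd (rem l (S k) (E1_sub_V chi))
             (lsum (fun j => rem l j (hscal (Ec (S k + 1 - j)) chi)) (seq 1 k)))
       (cmul (rem l (S k) Vpsi0) (hinner (psi l) chi)).
Proof.
  intros [Hl0 Hl1] Hchi. destruct (K0_orth v chi Hchi) as [_ Horth].
  induction k as [|k IH]; intros Hk Hdom.
  - change (rem l 2 v) with (cmul (RtoC (/ l)) (csub (rem l 1 v) (coef 1 v))).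
    rewrite (rem1_eq l v chi (conj Hl0 Hl1) Hchi), (coef_recursion 0 v chi chi ltac:(lia) Hchi Hchi).
    simpl. rewrite <- HE1. unfold lsum; simpl.
    cpx_field; lra.
  - destruct (Hdom (S k)) as [y Hy]; [lia|].
    change (rem l (S (S (S k))) v)
      with (cmul (RtoC (/ l)) (csub (rem l (S (S k)) v) (coef (S (S k)) v))).
    rewrite IH, (coef_recursion (S k) v y chi ltac:(lia) Hy Hchi)
      by (lia || (intros m Hm; apply Hdom; lia)).
    rewrite lsum_seq_S, Nat.sub_succ, Nat.sub_0_r.
    change (fun j => rem l (S j) (hscal (Ec (S (S k) + 1 - S j)) chi))
      with (fun j => cmul (RtoC (/ l)) (csub (rem l j (hscal (Ec (S k + 1 - j)) chi))
                                             (coef j (hscal (Ec (S k + 1 - j)) chi)))).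
    rewrite lsum_mul_sub.
    change (rem l (S (S k)) ?w) with (cmul (RtoC (/ l)) (csub (rem l (S k) w) (coef (S k) w))).
    rewrite (coef_Vpsi0 (S k)) by lia.
    change (rem l 1 ?w) with (cmul (RtoC (/ l)) (csub (hinner (psi l) w) (hinner (psi 0) w))).
    rewrite !hinner_scalr, Horth, Nat.add_sub.
    cpx_field; lra.
Qed.

Lemma in_dom_K_le k k' v : (k' <= k)%nat -> in_dom_K k v -> in_dom_K k' v.
Proof. intros Hk Hdom m Hm. apply Hdom. lia. Qed.

Lemma in_dom_K_E1_sub_V k v chi : (S k <= n - 1)%nat -> in_dom_K (S k) v -> K 0%nat v chi ->
  in_dom_K k (E1_sub_V chi).
Proof.
  intros Hk Hdom Hchi m Hm. destruct (Hdom (S m)) as [y Hy]; [lia|].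
  destruct (Kstep_dom (S m) (S m) v y chi) as [y' Hy']; auto; try lia.
  rewrite Lfun_diag, Nat.sub_succ, Nat.sub_0_r in Hy'. eauto.
Qed.

Lemma in_dom_K_scal j p v chi : (j + p <= n - 1)%nat -> (2 <= p)%nat ->
  in_dom_K (j + p) v -> K 0%nat v chi -> in_dom_K j (hscal (Ec p) chi).
Proof.
  intros Hjp Hp Hdom Hchi i Hi. destruct (Hdom (i + p)%nat) as [y Hy]; [lia|].
  destruct (Kstep_dom (i + p) (S i) v y chi) as [y' Hy']; auto; try lia.
  rewrite Lfun_lt, Nat.sub_succ, Nat.sub_0_r in Hy' by lia.
  replace (i + p + 1 - S i)%nat with p in Hy' by lia. eauto.
Qed.

Lemma rem1_cvg v : in_dom_K 1 v -> clim pos_range (fun l => rem l 1 v) (coef 1 v).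
Proof.
  intros Hdom. destruct (Hdom 0%nat) as [chi Hchi]; [lia|].
  destruct (K0_orth v chi Hchi) as [_ Horth].
  apply (clim_ext _ (fun l => cadd (hinner (psi l) (E1_sub_V chi))
           (cmul (csub (hinner (psi l) Vpsi0) (Ec 1%nat)) (hinner (psi l) chi)))).
  2:{ intros l Hl. symmetry. apply rem1_eq; auto. }
  replace (coef 1 v) with (cadd (hinner (psi 0) (E1_sub_V chi))
           (cmul (csub (hinner (psi 0) Vpsi0) (Ec 1%nat)) (hinner (psi 0) chi))).
  - auto using clim_add, clim_mul, clim_sub, clim_const, hinner_psi_cvg.
  - rewrite (coef_recursion 0 v chi chi), Horth by (auto; lia). unfold lsum; simpl. ring.
Qed.

Lemma rem_cvg_coef k v : (k <= n - 1)%nat -> in_dom_K k v ->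
  clim pos_range (fun l => rem l k v) (coef k v).
Proof.
  revert v; induction k as [k IH] using lt_wf_ind; intros v Hk Hdom.
  destruct k as [|[|k]]; [apply hinner_psi_cvg | apply rem1_cvg; exact Hdom |].
  destruct (Hdom 0%nat) as [chi Hchi]; [lia|].
  destruct (Hdom (S k)) as [y Hy]; [lia|].
  destruct (K0_orth v chi Hchi) as [_ Horth].
  apply (clim_ext _ (fun l =>
    cadd (cadd (rem l (S k) (E1_sub_V chi))
               (lsum (fun j => rem l j (hscal (Ec (S k + 1 - j)) chi)) (seq 1 k)))
         (cmul (rem l (S k) Vpsi0) (hinner (psi l) chi)))).
  2:{ intros l Hl. symmetry. apply rem_recursion; auto; [lia|].
      apply (in_dom_K_le (S (S k))); auto. }
  replace (coef (S (S k)) v) with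
    (cadd (cadd (coef (S k) (E1_sub_V chi))
                (lsum (fun j => coef j (hscal (Ec (S k + 1 - j)) chi)) (seq 1 k)))
          (cmul (coef (S k) Vpsi0) (hinner (psi 0) chi))).
  - apply clim_add; [apply clim_add|apply clim_mul].
    + apply IH; [lia|lia|]. apply (in_dom_K_E1_sub_V (S k) v chi); auto.
    + apply clim_lsum. intros j Hj. apply in_seq in Hj. apply IH; [lia|lia|].
      apply (in_dom_K_scal j (S k + 1 - j) v chi); try lia; auto.
      replace (j + (S k + 1 - j))%nat with (S (S k)) by lia. exact Hdom.
    + apply IH; [lia|lia|]. apply in_dom_K_Vpsi0. lia.
    + apply hinner_psi_cvg.
  - rewrite (coef_recursion (S k) v y chi), Horth by (auto; lia).
    rewrite Nat.sub_succ, Nat.sub_0_r. ring.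
Qed.

Lemma taylor_remainder l m : pos_range l -> (S m <= n)%nat ->
  csub (RtoC (E l)) (taylor Ec (S m) l) =
  cmul (RtoC (l ^ S m)) (csub (rem l m Vpsi0) (Ec (S m))).
Proof.
  intros [Hl0 Hl1]. induction m as [|m IH]; intros Hm.
  - unfold taylor; simpl. rewrite (E_first_order l), HE0 by lra. cpx_field.
  - rewrite taylor_S.
    change (rem l (S m) Vpsi0) with (cmul (RtoC (/ l)) (csub (rem l m Vpsi0) (coef m Vpsi0))).
    rewrite (coef_Vpsi0 m) by lia.
    replace (RtoC (E l)) with (cadd (taylor Ec (S m) l)
              (cmul (RtoC (l ^ S m)) (csub (rem l m Vpsi0) (Ec (S m)))))
      by (rewrite <- IH by lia; ring).
    change (l ^ S (S m)) with (l * l ^ S m).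
    cpx_field; lra.
Qed.

Theorem E_expansion m : (1 <= m <= n)%nat ->
  forall eps, 0 < eps -> exists d, 0 < d /\
    forall l, 0 < l <= lam0 -> l < d ->
      cmod (cmul (RtoC (/ (l ^ m))) (csub (RtoC (E l)) (taylor Ec m l))) < eps.
Proof.
  intros Hm. destruct m as [|m]; [lia|].
  assert (Hcvg := rem_cvg_coef m Vpsi0 ltac:(lia) (in_dom_K_Vpsi0 m ltac:(lia))).
  rewrite coef_Vpsi0 in Hcvg by lia.
  intros eps Heps.
  destruct (proj1 (clim_cmod _ pos_range_gt0 _ _) Hcvg eps Heps) as [d [Hd Hrem]].
  exists d; split; auto. intros l Hl Hld.
  rewrite (taylor_remainder l m Hl) by lia.
  replace (cmul (RtoC (/ l ^ S m)) (cmul (RtoC (l ^ S m)) (csub (rem l m Vpsi0) (Ec (S m)))))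
    with (csub (rem l m Vpsi0) (Ec (S m))) by (cpx_field; apply pow_nonzero; lra).
  apply Hrem; auto.
Qed.

End Expansion.
End Eigenvector.

Theorem mainTheorem6 (Hs : Hilbert) (H0 V : Op Hs) (lam0 : R) (E : R -> R)
  (psi : R -> Hs) (n : nat) (Ec : nat -> cpx) (K : nat -> rel Hs) :
  H1 Hs H0 V lam0 E psi ->
  (2 <= n)%nat ->
  (forall x y, K 0%nat x y <-> K0rel Hs H0 (E 0) (psi 0) x y) ->
  (forall m, (1 <= m <= n - 2)%nat ->
     forall x y, K m x y <-> Kstep Hs V Ec K (K 0%nat) m x y) ->
  Ec 0%nat = RtoC (E 0) ->
  Ec 1%nat = hinner (psi 0) (oapp V (psi 0)) ->
  (forall l, (l <= n - 2)%nat -> exists y, K l (Pbar Hs (psi 0) (oapp V (psi 0))) y) ->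
  (forall m, (2 <= m <= n)%nat ->
     exists y, K (m - 2)%nat (oapp V (psi 0)) y /\
               Ec m = copp (hinner (oapp V (psi 0)) y)) ->
  forall m, (1 <= m <= n)%nat ->
    forall eps, 0 < eps -> exists d, 0 < d /\
      forall l, 0 < l <= lam0 -> l < d ->
        cmod (cmul (RtoC (/ (l ^ m))) (csub (RtoC (E l)) (taylor Ec m l))) < eps.
Proof.
  intros [[H0_linear [_ [H0_sym _]]] [[_ [_ [V_sym _]]]
           [_ [[dom_H0_V _] [lam0_pos [Heigen [Hcont Hnorm]]]]]]]
         _ HK0 HKm HE0 HE1 _ HEm.
  apply (E_expansion Hs H0 V lam0 E psi) with (K := K); auto.
  - lra.
  - intros l Hl. apply Heigen; auto.
  - intros l Hl. apply Heigen; auto.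
  - intros phi Hphi Heq.
    destruct (Heigen 0 ltac:(lra)) as [_ [_ [_ Hsimple]]]. apply Hsimple; auto.
    simpl. rewrite Heq. change (RtoC 0) with c0. rewrite hscal_c0, hadd_0. reflexivity.
  - intros eps Heps. destruct (Hcont eps Heps) as [d [Hd Hclose]].
    exists d; split; auto. intros l Hl Hld. apply Hclose; auto.
Qed.
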